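(* Let $Y$ be a continuous random variable supported on $[0,\infty)$ whose density $f$ satisfies $f(t)\le Ce^{-\lambda t}$ for all $t\ge0$, for some $C,\lambda>0$, and such that the support of $Y$ can be partitioned into $N$ intervals on each of which $f$ is differentiable and monotone. Let $\alpha$ satisfy $0<\alpha\le\lambda/2$. Then there is a constant $K_\alpha$ (depending on $\alpha,C,\lambda,N$) such that for every complex $s$ with $\Re s = -\alpha$, \[ |\mathbb{E}[e^{-sY}]| \le \frac{K_\alpha}{\sqrt{|s|}}. \] *)

From Stdlib Require Import Reals.
From Coquelicot Require Import Coquelicot.
Open Scope R_scope.

Definition Cexp (z : C) : C :=
  (exp (Re z) * cos (Im z), exp (Re z) * sin (Im z)).

Definition is_density_on_nonneg (f : R -> R) : Prop :=
  (forall t, 0 <= f t) /\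
  (forall t, t < 0 -> f t = 0) /\
  is_RInt_gen f (at_point 0) (Rbar_locally p_infty) 1.

(* E[e^{-sY}] for Y with density f supported on [0,oo):
   the (improper) integral  \int_0^oo e^{-s t} f(t) dt  (C-valued) *)
Definition laplace_density (f : R -> R) (s : C) : C :=
  @RInt_gen C_R_CompleteNormedModule
    (fun t : R => scal (f t) (Cexp (Copp (Cmult s (RtoC t)))))
    (at_point 0) (Rbar_locally p_infty).

Definition monotone_on (f : R -> R) (a : R) (b : Rbar) : Prop :=
  (forall x y, a < x -> x <= y -> Rbar_lt y b -> f x <= f y) \/
  (forall x y, a < x -> x <= y -> Rbar_lt y b -> f y <= f x).

Definition piecewise_diff_monotone (N : nat) (f : R -> R) : Prop :=
  exists (a : nat -> R) (b : nat -> Rbar),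
    (forall i, (i < N)%nat -> 0 <= a i /\ Rbar_lt (a i) (b i)) /\
    (forall i j, (i < j)%nat -> (j < N)%nat ->
        Rbar_le (b i) (a j) \/ Rbar_le (b j) (a i)) /\
    (forall t, 0 <= t -> f t <> 0 ->
        exists i, (i < N)%nat /\ a i <= t /\ Rbar_le t (b i)) /\
    (forall i, (i < N)%nat ->
        (forall t, a i < t -> Rbar_lt t (b i) -> ex_derive f t) /\
        monotone_on f (a i) (b i)).

From Stdlib Require Import Reals Lra Lia List.
From Coquelicot Require Import Coquelicot.
Open Scope R_scope.

(* Write s = -al + i si.  The integrand f(t) e^(-st) has modulus f(t) e^(al t) <= C0 e^(-al t)
   (as lam >= 2 al), so E[e^(-sY)] converges and is at most C0/al; this settles small |si|.
   For large |si| split at T = ln|si| / (2 al): the tail is at most C0 e^(-al T)/al =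
   C0/(al sqrt|si|).  On [0, T] the real and imaginary parts are integrals of
   f(t) e^(al t) k(t) with k(t) = cos(si t) or -sin(si t), which satisfy k(t + h) = -k(t) for
   h = pi/|si|.  Pairing t with t + h shows that |int Phi k| <= 2 M h for every monotone
   Phi with values in [0, M]; on each of the N monotonicity pieces of f, f(t) e^(al t) is such a
   function or a difference of two of them, with M <= C0 e^(al T) = C0 sqrt|si|.  So the head is
   O(N C0 sqrt|si| / |si|) = O(1/sqrt|si|). *)

Lemma ex_RInt_sub (u : R -> R) (a b c d : R) :
  ex_RInt u a b -> a <= c -> c <= d -> d <= b -> ex_RInt u c d.
Proof.
  intros Hu Hac Hcd Hdb.
  apply (ex_RInt_Chasles_2 u a); [lra|].
  apply (ex_RInt_Chasles_1 u a d b); [lra|exact Hu].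
Qed.

Lemma RInt_Chasles_R (u : R -> R) (a b c : R) :
  a <= b <= c -> ex_RInt u a c -> RInt u a c = RInt u a b + RInt u b c.
Proof.
  intros Hb Hu. symmetry. apply (RInt_Chasles u).
  - apply (ex_RInt_Chasles_1 u a b c Hb Hu).
  - apply (ex_RInt_Chasles_2 u a b c Hb Hu).
Qed.

Lemma is_RInt_shift (u : R -> R) (a b h l : R) :
  is_RInt u (a + h) (b + h) l -> is_RInt (fun t => u (t + h)) a b l.
Proof.
  intros Hu.
  apply (is_RInt_ext (fun t => scal 1 (u (1 * t + h)))).
  - intros t _. change (1 * u (1 * t + h) = u (t + h)). rewrite !Rmult_1_l. reflexivity.
  - apply (is_RInt_comp_lin u 1 h a b l). rewrite !Rmult_1_l. exact Hu.
Qed.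

Lemma ex_RInt_shift (u : R -> R) (a b h : R) :
  ex_RInt u (a + h) (b + h) -> ex_RInt (fun t => u (t + h)) a b.
Proof. intros [l Hl]. exists l. apply is_RInt_shift, Hl. Qed.

Lemma is_RInt_R0 (a b : R) : is_RInt (fun _ => 0) a b 0.
Proof.
  pose proof (@is_RInt_const R_NormedModule a b 0) as H.
  change (scal (b - a) 0) with ((b - a) * 0) in H. rewrite Rmult_0_r in H. exact H.
Qed.

Lemma exp_le_exp (x y : R) : x <= y -> exp x <= exp y.
Proof. intros [H|H]; [apply Rlt_le, exp_increasing, H|rewrite H; apply Rle_refl]. Qed.

Lemma continuous_exp_scale (c x : R) : continuous (fun t => exp (c * t)) x.
Proof. apply (ex_derive_continuous (fun t => exp (c * t))). auto_derive. exact I. Qed.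

(** * Integrability of products *)

Lemma ex_RInt_unif_limit (h : nat -> R -> R) (g : R -> R) (a b : R) :
  (forall n, ex_RInt (h n) a b) ->
  (forall eps, 0 < eps -> exists n0, forall n t, (n0 <= n)%nat -> a <= t <= b ->
     Rabs (h n t - g t) < eps) ->
  a <= b -> ex_RInt g a b.
Proof.
  intros Hh Hconv Hab.
  set (h' := fun n t => if Rle_dec a t then if Rle_dec t b then h n t else g t else g t).
  assert (Hh' : forall n, ex_RInt (h' n) a b).
  { intros n. apply (ex_RInt_ext (h n)); [|apply Hh].
    intros t Ht. rewrite Rmin_left, Rmax_right in Ht by lra. unfold h'.
    destruct (Rle_dec a t); [|lra]. destruct (Rle_dec t b); [reflexivity|lra]. }
  assert (Hlim : filterlim h' eventually (@locally (fct_UniformSpace R R_UniformSpace) g)).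
  { intros P [eps HP]. destruct (Hconv eps (cond_pos eps)) as [n0 Hn0].
    exists n0. intros n Hn. apply HP. intros t. unfold h'.
    destruct (Rle_dec a t); [destruct (Rle_dec t b)|].
    - apply (Hn0 n t Hn). lra.
    - apply ball_center.
    - apply ball_center. }
  destruct (filterlim_RInt h' a b eventually _ g (fun n => RInt (h' n) a b)) as [l [_ Hl]].
  - intros n. apply RInt_correct, Hh'.
  - exact Hlim.
  - exists l. exact Hl.
Qed.

Definition grid_floor (a d t : R) : R := a + d * IZR (Int_part ((t - a) / d)).

Lemma grid_floor_bounds (a d t : R) :
  0 < d -> a <= t -> a <= grid_floor a d t <= t /\ t < grid_floor a d t + d.
Proof.
  intros Hd Ht. unfold grid_floor.
  set (r := (t - a) / d). assert (Hr : 0 <= r) by (apply Rdiv_le_0_compat; lra).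
  assert (Er : d * r = t - a) by (unfold r; field; lra).
  destruct (base_Int_part r) as [H1 H2].
  assert (H0 : (0 <= Int_part r)%Z).
  { assert (Hlt : IZR (-1) < IZR (Int_part r)) by lra. apply lt_IZR in Hlt. lia. }
  apply IZR_le in H0. set (z := IZR (Int_part r)) in *.
  assert (Hz1 : 0 <= d * z) by (apply Rmult_le_pos; lra).
  assert (Hz2 : d * z <= d * r) by (apply Rmult_le_compat_l; lra).
  assert (Hz3 : d * r < d * (z + 1)) by (apply Rmult_lt_compat_l; lra).
  lra.
Qed.

Lemma grid_floor_cell (a d t : R) (k : nat) :
  0 < d -> a + INR k * d < t < a + (INR k + 1) * d -> grid_floor a d t = a + INR k * d.
Proof.
  intros Hd Ht. unfold grid_floor.
  replace (Int_part ((t - a) / d)) with (Z.of_nat k).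
  - rewrite <- INR_IZR_INZ. ring.
  - apply Int_part_spec. rewrite <- INR_IZR_INZ. split.
    + apply Rmult_lt_reg_r with d; [lra|]. unfold Rdiv. rewrite Rmult_minus_distr_r, Rmult_assoc, Rinv_l; lra.
    + apply Rmult_le_reg_r with d; [lra|]. unfold Rdiv. rewrite Rmult_assoc, Rinv_l; lra.
Qed.

Lemma ex_RInt_mult_grid (f g : R -> R) (a b d : R) (m : nat) :
  0 < d -> b = a + INR m * d -> ex_RInt f a b ->
  ex_RInt (fun t => f t * g (grid_floor a d t)) a b.
Proof.
  intros Hd ->. induction m as [|m IH]; intros Hf.
  { rewrite Rmult_0_l, Rplus_0_r. apply ex_RInt_point. }
  rewrite S_INR in Hf |- *. pose proof (pos_INR m).
  assert (Hm : a <= a + INR m * d <= a + (INR m + 1) * d).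
  { assert (0 <= INR m * d) by (apply Rmult_le_pos; lra). lra. }
  apply (ex_RInt_Chasles_0 _ _ (a + INR m * d)); [exact Hm| |].
  - apply IH, (ex_RInt_Chasles_1 _ _ _ _ Hm Hf).
  - apply (ex_RInt_ext (fun t => scal (g (a + INR m * d)) (f t))).
    + intros t Ht. rewrite Rmin_left, Rmax_right in Ht by lra.
      rewrite (grid_floor_cell a d t m Hd Ht).
      change (g (a + INR m * d) * f t = f t * g (a + INR m * d)). ring.
    + apply (ex_RInt_scal f), (ex_RInt_Chasles_2 f _ _ _ Hm Hf).
Qed.

Lemma grid_floor_mult_approx (f g : R -> R) (a b M eps : R) :
  0 < M -> 0 < eps -> (forall t, a <= t <= b -> Rabs (f t) <= M) ->
  (forall x, a <= x <= b -> continuous g x) ->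
  exists delta, 0 < delta /\ forall d t, 0 < d < delta -> a <= t <= b ->
    Rabs (f t * g (grid_floor a d t) - f t * g t) < eps.
Proof.
  intros HM Heps Hf Hg.
  assert (Heps' : 0 < eps / M) by (apply Rdiv_lt_0_compat; lra).
  destruct (unifcont_normed_1d g a b Hg (mkposreal _ Heps')) as [delta Hdelta].
  exists delta. split; [apply cond_pos|]. intros d t Hd Ht.
  destruct (grid_floor_bounds a d t (proj1 Hd) (proj1 Ht)) as [Hs1 Hs2].
  assert (Hball : ball_norm (g t) (eps / M) (g (grid_floor a d t))).
  { apply Hdelta; [exact Ht|lra|].
    change (Rabs (grid_floor a d t - t) < delta). rewrite Rabs_left1; lra. }
  change (Rabs (g (grid_floor a d t) - g t) < eps / M) in Hball.
  rewrite <- Rmult_minus_distr_l, Rabs_mult.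
  apply Rle_lt_trans with (M * Rabs (g (grid_floor a d t) - g t)).
  - apply Rmult_le_compat_r; [apply Rabs_pos|apply Hf, Ht].
  - replace eps with (M * (eps / M)) by (field; lra). apply Rmult_lt_compat_l; lra.
Qed.

Lemma ex_RInt_mult_continuous (f g : R -> R) (a b : R) :
  a <= b -> ex_RInt f a b -> (forall x, a <= x <= b -> continuous g x) ->
  ex_RInt (fun t => f t * g t) a b.
Proof.
  intros Hab Hf Hg.
  destruct (Req_dec a b) as [<-|Hab']; [apply ex_RInt_point|].
  destruct (ex_RInt_ub f a b Hf) as [M HM].
  rewrite Rmin_left, Rmax_right in HM by lra.
  assert (HM' : forall t, a <= t <= b -> Rabs (f t) <= Rabs M + 1).
  { intros t Ht. pose proof (HM t Ht). pose proof (Rle_abs M). apply Rle_trans with M; [exact H|lra]. }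
  set (d := fun n => (b - a) / INR (S n)).
  assert (Hd : forall n, 0 < d n) by (intros n; apply Rdiv_lt_0_compat; [lra|apply lt_0_INR; lia]).
  apply (ex_RInt_unif_limit (fun n t => f t * g (grid_floor a (d n) t))); [|intros eps Heps|lra].
  - intros n. apply (ex_RInt_mult_grid f g a b (d n) (S n) (Hd n)); [|exact Hf].
    unfold d. field. apply not_0_INR. lia.
  - destruct (grid_floor_mult_approx f g a b (Rabs M + 1) eps) as [delta [Hdelta Happrox]];
      try assumption; [pose proof (Rabs_pos M); lra|].
    destruct (INR_archimed delta (b - a) Hdelta) as [n0 Hn0].
    exists n0. intros n t Hn Ht. apply Happrox; [split; [apply Hd|]|exact Ht].
    unfold d. apply Rmult_lt_reg_r with (INR (S n)); [apply lt_0_INR; lia|].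
    unfold Rdiv. rewrite Rmult_assoc, Rinv_l by (apply not_0_INR; lia).
    apply le_INR in Hn. rewrite S_INR.
    assert (INR n0 * delta <= INR n * delta) by (apply Rmult_le_compat_r; lra).
    lra.
Qed.

(** * Monotone functions against an antiperiodic kernel *)

Lemma abs_RInt_mult_le_RInt (D k : R -> R) (a b : R) :
  a <= b -> ex_RInt D a b -> ex_RInt (fun t => D t * k t) a b ->
  (forall t, Rabs (k t) <= 1) -> (forall t, a < t < b -> 0 <= D t) ->
  Rabs (RInt (fun t => D t * k t) a b) <= RInt D a b.
Proof.
  intros Hab HD HDk Hk HD0.
  eapply Rle_trans; [apply (abs_RInt_le _ _ _ Hab HDk)|].
  apply RInt_le; [exact Hab|apply (ex_RInt_norm _ _ _ HDk)|exact HD|].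
  intros t Ht. rewrite Rabs_mult, Rabs_pos_eq by (apply HD0, Ht).
  pose proof (HD0 t Ht). pose proof (Hk t). pose proof (Rabs_pos (k t)).
  rewrite <- (Rmult_1_r (D t)) at 2. apply Rmult_le_compat_l; lra.
Qed.

Lemma abs_RInt_signed_mult_le (D k : R -> R) (a b : R) :
  a <= b -> ex_RInt D a b -> ex_RInt (fun t => D t * k t) a b ->
  (forall t, Rabs (k t) <= 1) ->
  ((forall t, a < t < b -> 0 <= D t) \/ (forall t, a < t < b -> D t <= 0)) ->
  Rabs (RInt (fun t => D t * k t) a b) <= Rabs (RInt D a b).
Proof.
  intros Hab HD HDk Hk [Hpos|Hneg].
  - rewrite (Rabs_pos_eq (RInt D a b)) by (apply RInt_ge_0; assumption).
    apply abs_RInt_mult_le_RInt; assumption.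
  - assert (HoD : ex_RInt (fun t => - D t) a b) by apply (ex_RInt_opp D _ _ HD).
    assert (HoDk : ex_RInt (fun t => - D t * k t) a b).
    { apply (ex_RInt_ext (fun t => opp (D t * k t))).
      - intros t _. change (- (D t * k t) = - D t * k t). ring.
      - apply (ex_RInt_opp _ _ _ HDk). }
    assert (E : RInt (fun t => - D t) a b = - RInt D a b) by apply (RInt_opp D _ _ HD).
    assert (Ek : RInt (fun t => - D t * k t) a b = - RInt (fun t => D t * k t) a b).
    { rewrite (RInt_ext (fun t => - D t * k t) (fun t => opp (D t * k t)))
        by (intros t _; change (- D t * k t = - (D t * k t)); ring).
      apply (RInt_opp (fun t => D t * k t) _ _ HDk). }
    rewrite <- Rabs_Ropp, <- Ek, <- (Rabs_Ropp (RInt D a b)), <- E.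
    rewrite (Rabs_pos_eq (RInt (fun t => - D t) a b)).
    + apply abs_RInt_mult_le_RInt; [assumption|assumption|assumption|assumption|].
      intros t Ht. specialize (Hneg t Ht). lra.
    + apply RInt_ge_0; [assumption|assumption|]. intros t Ht. specialize (Hneg t Ht). lra.
Qed.

Lemma RInt_antiperiodic_double (P : R -> R) (a b h : R) :
  0 <= h -> a + h <= b -> ex_RInt P a b ->
  2 * RInt P a b =
    RInt (fun t => P t + P (t + h)) a (b - h) + RInt P a (a + h) + RInt P (b - h) b.
Proof.
  intros Hh Hab HP.
  assert (HPa : ex_RInt P a (b - h)) by (apply (ex_RInt_sub P a b _ _ HP); lra).
  assert (HPb : ex_RInt P (a + h) b) by (apply (ex_RInt_sub P a b _ _ HP); lra).
  assert (Esum : RInt (fun t => P t + P (t + h)) a (b - h) = RInt P a (b - h) + RInt P (a + h) b).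
  { apply is_RInt_unique, (is_RInt_plus P (fun t => P (t + h))); [apply (RInt_correct P), HPa|].
    apply is_RInt_shift. replace (b - h + h) with b by ring. apply (RInt_correct P), HPb. }
  pose proof (RInt_Chasles_R P a (a + h) b ltac:(lra) HP).
  pose proof (RInt_Chasles_R P a (b - h) b ltac:(lra) HP).
  lra.
Qed.

Lemma abs_RInt_shift_difference_le (Phi k : R -> R) (a b h M : R) :
  0 < h -> 2 * h <= b - a -> ex_RInt Phi a b ->
  ex_RInt (fun t => (Phi t - Phi (t + h)) * k t) a (b - h) -> (forall x, Rabs (k x) <= 1) ->
  (forall t, a <= t <= b -> 0 <= Phi t <= M) -> monotone_on Phi a b ->
  Rabs (RInt (fun t => (Phi t - Phi (t + h)) * k t) a (b - h)) <= h * M.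
Proof.
  intros Hh Hab HPhi HDk Hk1 HM Hmon.
  set (D := fun t => Phi t - Phi (t + h)).
  assert (HPhia : ex_RInt Phi a (b - h)) by (apply (ex_RInt_sub Phi a b _ _ HPhi); lra).
  assert (HPhib : ex_RInt Phi (a + h) b) by (apply (ex_RInt_sub Phi a b _ _ HPhi); lra).
  assert (HPhis : ex_RInt (fun t => Phi (t + h)) a (b - h))
    by (apply ex_RInt_shift; replace (b - h + h) with b by ring; exact HPhib).
  (* The integral of [D] telescopes to the difference of the integrals of [Phi] over the two end cells. *)
  assert (ID : RInt D a (b - h) = RInt Phi a (a + h) - RInt Phi (b - h) b).
  { transitivity (RInt Phi a (b - h) - RInt Phi (a + h) b).
    - apply is_RInt_unique.
      apply (is_RInt_minus Phi (fun t => Phi (t + h))); [apply (RInt_correct Phi), HPhia|].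
      apply is_RInt_shift. replace (b - h + h) with b by ring. apply (RInt_correct Phi), HPhib.
    - rewrite (RInt_Chasles_R Phi a (a + h) (b - h)) by (lra || exact HPhia).
      rewrite (RInt_Chasles_R Phi (a + h) (b - h) b) by (lra || exact HPhib).
      lra. }
  assert (Hcell : forall c, a <= c -> c + h <= b -> 0 <= RInt Phi c (c + h) <= h * M).
  { intros c Hc Hch. assert (HPc : ex_RInt Phi c (c + h)) by (apply (ex_RInt_sub Phi a b _ _ HPhi); lra).
    split.
    - apply RInt_ge_0; [lra|exact HPc|]. intros t Ht. apply HM. lra.
    - eapply Rle_trans; [apply Rle_abs|].
      replace h with (c + h - c) at 2 by ring. apply abs_RInt_le_const; [lra|exact HPc|].
      intros t Ht. rewrite Rabs_pos_eq; apply HM; lra. }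
  eapply Rle_trans.
  - apply abs_RInt_signed_mult_le; [lra|apply (ex_RInt_minus Phi _ _ _ HPhia HPhis)|exact HDk|exact Hk1|].
    destruct Hmon as [Hm|Hm]; [right|left]; intros t Ht; unfold D.
    + assert (Phi t <= Phi (t + h)) by (apply Hm; simpl; lra). lra.
    + assert (Phi (t + h) <= Phi t) by (apply Hm; simpl; lra). lra.
  - fold D. rewrite ID. pose proof (Hcell a). pose proof (Hcell (b - h)).
    replace (b - h + h) with b in * by ring. apply Rabs_le. lra.
Qed.

Lemma abs_RInt_monotone_antiperiodic_le (Phi k : R -> R) (a b h M : R) :
  a <= b -> 0 < h -> ex_RInt Phi a b ->
  (forall x, continuous k x) -> (forall x, Rabs (k x) <= 1) -> (forall x, k (x + h) = - k x) ->
  (forall t, a <= t <= b -> 0 <= Phi t <= M) -> monotone_on Phi a b ->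
  Rabs (RInt (fun t => Phi t * k t) a b) <= 2 * M * h.
Proof.
  intros Hab Hh HPhi Hkc Hk1 Hkh HM Hmon.
  assert (HM0 : 0 <= M) by (destruct (HM a); lra).
  set (P := fun t => Phi t * k t).
  assert (HP : ex_RInt P a b) by (apply ex_RInt_mult_continuous; auto).
  assert (Hshort : forall c d, a <= c -> c <= d -> d <= b -> Rabs (RInt P c d) <= (d - c) * M).
  { intros c d Hc Hcd Hd. apply abs_RInt_le_const; [lra|apply (ex_RInt_sub P a b _ _ HP); lra|].
    intros t Ht. unfold P. rewrite Rabs_mult, (Rabs_pos_eq (Phi t)) by (apply HM; lra).
    destruct (HM t ltac:(lra)). pose proof (Hk1 t). pose proof (Rabs_pos (k t)).
    rewrite <- (Rmult_1_r M). apply Rmult_le_compat; lra. }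
  destruct (Rle_lt_dec (b - a) (2 * h)) as [Hs|Hl].
  { eapply Rle_trans; [apply Hshort; lra|].
    replace (2 * M * h) with (2 * h * M) by ring. apply Rmult_le_compat_r; lra. }
  assert (HD : forall t, P t + P (t + h) = (Phi t - Phi (t + h)) * k t)
    by (intros t; unfold P; rewrite Hkh; ring).
  assert (HDk : ex_RInt (fun t => (Phi t - Phi (t + h)) * k t) a (b - h)).
  { apply (ex_RInt_ext (fun t => plus (P t) (P (t + h)))); [intros t _; apply HD|].
    apply (ex_RInt_plus P); [apply (ex_RInt_sub P a b _ _ HP); lra|].
    apply ex_RInt_shift. replace (b - h + h) with b by ring. apply (ex_RInt_sub P a b _ _ HP); lra. }
  pose proof (RInt_antiperiodic_double P a b h ltac:(lra) ltac:(lra) HP) as E.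
  rewrite (RInt_ext (fun t => P t + P (t + h)) (fun t => (Phi t - Phi (t + h)) * k t)) in E
    by (intros t _; apply HD).
  pose proof (abs_RInt_shift_difference_le Phi k a b h M Hh ltac:(lra) HPhi HDk Hk1 HM Hmon) as BD.
  assert (B1 : Rabs (RInt P a (a + h)) <= h * M).
  { replace h with (a + h - a) at 2 by ring. apply Hshort; lra. }
  assert (B2 : Rabs (RInt P (b - h) b) <= h * M).
  { replace h with (b - (b - h)) at 2 by ring. apply Hshort; lra. }
  apply Rabs_le_between in BD. apply Rabs_le_between in B1. apply Rabs_le_between in B2.
  apply Rabs_le. fold P. lra.
Qed.

Section ExpWeightedPiece.

Variables (f k : R -> R) (C0 lam al lo hi h : R).
Hypotheses (Hal : 0 <= al <= lam) (Hh : 0 < h) (Hlo : 0 <= lo <= hi) (Hf : ex_RInt f lo hi)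
  (Hf0 : forall t, 0 <= f t) (Hfb : forall t, 0 <= t -> f t <= C0 * exp (- lam * t))
  (Hkc : forall x, continuous k x) (Hk1 : forall x, Rabs (k x) <= 1)
  (Hkh : forall x, k (x + h) = - k x).

Let f_le_C0 : forall t, 0 <= t -> f t <= C0.
Proof.
  intros t Ht. pose proof (Hfb t Ht). pose proof (Hf0 t).
  assert (exp (- lam * t) <= 1) by (rewrite <- exp_0; apply exp_le_exp; nra).
  assert (0 <= C0) by (pose proof (exp_pos (- lam * t)); nra). nra.
Qed.

Let ex_RInt_f_mult (g : R -> R) : (forall x, continuous g x) -> ex_RInt (fun t => f t * g t) lo hi.
Proof. intros Hg. apply ex_RInt_mult_continuous; auto; lra. Qed.

Lemma abs_RInt_exp_weighted_nondecreasing_le :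
  (forall x y, lo < x -> x <= y -> y < hi -> f x <= f y) ->
  Rabs (RInt (fun t => f t * (exp (al * t) * k t)) lo hi) <= 2 * C0 * h.
Proof.
  intros Hm.
  rewrite (RInt_ext _ (fun t => f t * exp (al * t) * k t)) by (intros; symmetry; apply Rmult_assoc).
  apply abs_RInt_monotone_antiperiodic_le; auto; [lra|apply ex_RInt_f_mult, continuous_exp_scale| |].
  - intros t Ht. split; [apply Rmult_le_pos; [apply Hf0|apply Rlt_le, exp_pos]|].
    apply Rle_trans with (C0 * exp (- lam * t) * exp (al * t));
      [apply Rmult_le_compat_r; [apply Rlt_le, exp_pos|apply Hfb; lra]|].
    rewrite Rmult_assoc, <- exp_plus.
    assert (exp (- lam * t + al * t) <= 1) by (rewrite <- exp_0; apply exp_le_exp; nra).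
    pose proof (f_le_C0 t ltac:(lra)). pose proof (Hf0 t). nra.
  - left. intros x y Hx Hxy Hy.
    apply Rmult_le_compat; [apply Hf0|apply Rlt_le, exp_pos|apply Hm; assumption|].
    apply exp_le_exp. nra.
Qed.

Lemma abs_RInt_exp_weighted_nonincreasing_le :
  (forall x y, lo < x -> x <= y -> y < hi -> f y <= f x) ->
  Rabs (RInt (fun t => f t * (exp (al * t) * k t)) lo hi) <= 4 * C0 * exp (al * hi) * h.
Proof.
  intros Hm.
  (* [f e^(al t) = f E - f (E - e^(al t))] with both weights nonincreasing, [E = e^(al hi)]. *)
  set (E := exp (al * hi)).
  assert (HE : 1 <= E) by (unfold E; rewrite <- exp_0; apply exp_le_exp; nra).
  assert (HEt : forall t, t <= hi -> 0 <= E - exp (al * t) <= E).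
  { intros t Ht. assert (exp (al * t) <= E) by (apply exp_le_exp; nra).
    pose proof (exp_pos (al * t)). lra. }
  set (Phi1 := fun t => f t * E).
  set (Phi2 := fun t => f t * (E - exp (al * t))).
  assert (Hc2 : forall x, continuous (fun t => E - exp (al * t)) x)
    by (intros x; apply (continuous_minus (fun _ => E)); [apply continuous_const|apply continuous_exp_scale]).
  assert (B1 : Rabs (RInt (fun t => Phi1 t * k t) lo hi) <= 2 * (C0 * E) * h).
  { apply abs_RInt_monotone_antiperiodic_le; auto; [lra|apply ex_RInt_f_mult; intros; apply continuous_const| |].
    - intros t Ht. unfold Phi1. pose proof (Hf0 t). pose proof (f_le_C0 t ltac:(lra)).
      split; [apply Rmult_le_pos|apply Rmult_le_compat_r]; lra.
    - right. intros x y Hx Hxy Hy. unfold Phi1. apply Rmult_le_compat_r; [lra|auto]. }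
  assert (B2 : Rabs (RInt (fun t => Phi2 t * k t) lo hi) <= 2 * (C0 * E) * h).
  { apply abs_RInt_monotone_antiperiodic_le; auto; [lra|apply ex_RInt_f_mult, Hc2| |].
    - intros t Ht. unfold Phi2. pose proof (Hf0 t). pose proof (f_le_C0 t ltac:(lra)). pose proof (HEt t ltac:(lra)).
      split; [apply Rmult_le_pos|apply Rmult_le_compat]; lra.
    - right. intros x y Hx Hxy Hy. unfold Phi2. simpl in Hy.
      assert (exp (al * x) <= exp (al * y)) by (apply exp_le_exp; nra).
      apply Rmult_le_compat; [apply Hf0|apply HEt; lra|apply Hm; auto|lra]. }
  assert (HP1 : ex_RInt (fun t => Phi1 t * k t) lo hi)
    by (apply (ex_RInt_mult_continuous Phi1); [lra|apply ex_RInt_f_mult; intros; apply continuous_const|auto]).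
  assert (HP2 : ex_RInt (fun t => Phi2 t * k t) lo hi)
    by (apply (ex_RInt_mult_continuous Phi2); [lra|apply ex_RInt_f_mult, Hc2|auto]).
  replace (RInt (fun t => f t * (exp (al * t) * k t)) lo hi)
    with (RInt (fun t => Phi1 t * k t) lo hi - RInt (fun t => Phi2 t * k t) lo hi).
  - eapply Rle_trans; [apply Rabs_triang|]. rewrite Rabs_Ropp. lra.
  - symmetry. apply is_RInt_unique.
    apply (is_RInt_ext (fun t => minus (Phi1 t * k t) (Phi2 t * k t))).
    + intros t _. unfold Phi1, Phi2, minus, plus, opp. simpl. ring.
    + apply (is_RInt_minus (fun t => Phi1 t * k t) (fun t => Phi2 t * k t));
        [apply (RInt_correct (fun t => Phi1 t * k t)), HP1
        |apply (RInt_correct (fun t => Phi2 t * k t)), HP2].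
Qed.

Lemma abs_RInt_exp_weighted_monotone_le (T : R) :
  hi <= T -> monotone_on f lo hi ->
  Rabs (RInt (fun t => f t * (exp (al * t) * k t)) lo hi) <= 4 * C0 * exp (al * T) * h.
Proof.
  intros HT [Hm|Hm].
  - eapply Rle_trans; [apply abs_RInt_exp_weighted_nondecreasing_le, Hm|].
    assert (HC0 : 0 <= C0) by (pose proof (f_le_C0 lo ltac:(lra)); pose proof (Hf0 lo); lra).
    assert (1 <= exp (al * T)) by (rewrite <- exp_0; apply exp_le_exp; nra).
    assert (0 <= C0 * h) by (apply Rmult_le_pos; lra). nra.
  - eapply Rle_trans; [apply abs_RInt_exp_weighted_nonincreasing_le, Hm|].
    assert (HC0 : 0 <= C0) by (pose proof (f_le_C0 lo ltac:(lra)); pose proof (Hf0 lo); lra).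
    assert (exp (al * hi) <= exp (al * T)) by (apply exp_le_exp; nra).
    assert (0 <= 4 * C0 * h) by (apply Rmult_le_pos; lra). nra.
Qed.

End ExpWeightedPiece.

(** * Splitting along the monotonicity pieces *)

Lemma is_RInt_zero_off_point (d : R -> R) (p a b : R) :
  (forall t, t <> p -> d t = 0) -> is_RInt d a b 0.
Proof.
  intros Hd.
  assert (Hside : forall u v, p <= Rmin u v \/ Rmax u v <= p -> is_RInt d u v 0).
  { intros u v Huv. apply (is_RInt_ext (fun _ => 0)); [|apply is_RInt_R0].
    intros t Ht. symmetry. apply Hd. lra. }
  rewrite <- (Rplus_0_r 0). apply (is_RInt_Chasles d a p b); apply Hside.
  - destruct (Rle_dec a p); [right; rewrite Rmax_right|left; rewrite Rmin_right]; lra.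
  - destruct (Rle_dec p b); [left; rewrite Rmin_left|right; rewrite Rmax_left]; lra.
Qed.

Lemma is_RInt_finite_support (S : list R) : forall (d : R -> R) (a b : R),
  (forall t, ~ In t S -> d t = 0) -> is_RInt d a b 0.
Proof.
  induction S as [|p S IH]; intros d a b Hd.
  - apply (is_RInt_ext (fun _ => 0)); [intros t _; symmetry; apply Hd; auto|apply is_RInt_R0].
  - set (d' := fun t => if Req_EM_T t p then 0 else d t).
    set (dp := fun t => if Req_EM_T t p then d t else 0).
    apply (is_RInt_ext (fun t => plus (d' t) (dp t))).
    + intros t _. unfold d', dp, plus. simpl. destruct (Req_EM_T t p); ring.
    + rewrite <- (Rplus_0_r 0). apply (is_RInt_plus d' dp).
      * apply IH. intros t Ht. unfold d'. destruct (Req_EM_T t p) as [|Htp]; [reflexivity|].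
        apply Hd. intros [E|E]; [congruence|contradiction].
      * apply (is_RInt_zero_off_point _ p). intros t Htp. unfold dp.
        destruct (Req_EM_T t p); [contradiction|reflexivity].
Qed.

Lemma abs_RInt_le_pieces (P : nat -> R -> bool) (pts : list R) (a b B : R) (N : nat) :
  forall u : R -> R, ex_RInt u a b ->
  (forall i j t, (i < N)%nat -> (j < N)%nat -> P i t = true -> P j t = true -> i = j) ->
  (forall t, u t <> 0 -> In t pts \/ exists i, (i < N)%nat /\ P i t = true) ->
  (forall i, (i < N)%nat ->
     exists l, is_RInt (fun t => if P i t then u t else 0) a b l /\ Rabs l <= B) ->
  Rabs (RInt u a b) <= INR N * B.
Proof.
  induction N as [|N IH]; intros u Hu Hdisj Hcov Hpieces.
  - rewrite (is_RInt_unique u a b 0), Rabs_R0, Rmult_0_l; [apply Rle_refl|].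
    apply (is_RInt_finite_support pts). intros t Ht.
    destruct (Req_dec (u t) 0) as [|Hut]; [assumption|].
    destruct (Hcov t Hut) as [|[i [Hi _]]]; [contradiction|lia].
  - set (w := fun t => if P N t then u t else 0).
    set (v := fun t => if P N t then 0 else u t).
    destruct (Hpieces N (Nat.lt_succ_diag_r N)) as [lw [Hw Bw]].
    change (is_RInt w a b lw) in Hw.
    assert (Hv : ex_RInt v a b).
    { apply (ex_RInt_ext (fun t => minus (u t) (w t))).
      - intros t _. unfold v, w, minus, plus, opp. simpl. destruct (P N t); ring.
      - apply (ex_RInt_minus u w _ _ Hu). exists lw. exact Hw. }
    assert (Esplit : RInt u a b = lw + RInt v a b).
    { apply is_RInt_unique. apply (is_RInt_ext (fun t => plus (w t) (v t))).
      - intros t _. unfold v, w, plus. simpl. destruct (P N t); ring.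
      - apply (is_RInt_plus w v); [exact Hw|apply (RInt_correct v), Hv]. }
    assert (Hvi : forall i, (i < N)%nat ->
      forall t, (if P i t then u t else 0) = (if P i t then v t else 0)).
    { intros i Hi t. unfold v. destruct (P i t) eqn:Hit; [|reflexivity].
      destruct (P N t) eqn:HNt; [|reflexivity].
      assert (i = N) by (apply (Hdisj i N t); auto). lia. }
    assert (Bv : Rabs (RInt v a b) <= INR N * B).
    { apply IH; [exact Hv| | |].
      - intros i j t Hi Hj. apply Hdisj; lia.
      - intros t Hvt. unfold v in Hvt. destruct (P N t) eqn:HNt; [contradiction|].
        destruct (Hcov t Hvt) as [Hpts|[i [Hi Hit]]]; [left; exact Hpts|right].
        exists i. split; [|exact Hit].
        destruct (Nat.eq_dec i N) as [->|]; [congruence|lia].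
      - intros i Hi. destruct (Hpieces i ltac:(lia)) as [l [Hl Bl]].
        exists l. split; [|exact Bl].
        apply (is_RInt_ext (fun t => if P i t then u t else 0)); [|exact Hl].
        intros t _. apply Hvi, Hi. }
    rewrite Esplit, S_INR, Rmult_plus_distr_r, Rmult_1_l.
    eapply Rle_trans; [apply Rabs_triang|]. lra.
Qed.

Definition in_piece (a : R) (b : Rbar) (t : R) : bool :=
  if Rlt_dec a t then if Rbar_lt_dec t b then true else false else false.

Lemma in_piece_true (a : R) (b : Rbar) (t : R) :
  in_piece a b t = true <-> a < t /\ Rbar_lt t b.
Proof.
  unfold in_piece. destruct (Rlt_dec a t); [destruct (Rbar_lt_dec t b)|]; split;
    intros H; try discriminate; tauto.
Qed.

Lemma in_piece_disjoint (a : nat -> R) (b : nat -> Rbar) (N : nat) :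
  (forall i j, (i < j)%nat -> (j < N)%nat -> Rbar_le (b i) (a j) \/ Rbar_le (b j) (a i)) ->
  forall i j t, (i < N)%nat -> (j < N)%nat ->
    in_piece (a i) (b i) t = true -> in_piece (a j) (b j) t = true -> i = j.
Proof.
  intros Hdisj.
  assert (Hlt : forall i j t, (i < j)%nat -> (j < N)%nat ->
    in_piece (a i) (b i) t = true -> in_piece (a j) (b j) t = true -> False).
  { intros i j t Hij Hj Hi' Hj'. apply in_piece_true in Hi', Hj'.
    destruct Hi' as [Hai Hbi], Hj' as [Haj Hbj].
    destruct (Hdisj i j Hij Hj) as [H|H].
    - destruct (b i) as [r| |]; simpl in H, Hbi; try contradiction; lra.
    - destruct (b j) as [r| |]; simpl in H, Hbj; try contradiction; lra. }
  intros i j t Hi Hj Hit Hjt.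
  destruct (Nat.lt_total i j) as [Hij|[Hij|Hij]]; [exfalso|exact Hij|exfalso].
  - exact (Hlt i j t Hij Hj Hit Hjt).
  - exact (Hlt j i t Hij Hi Hjt Hit).
Qed.

Lemma monotone_on_sub (f : R -> R) (a : R) (b : Rbar) (lo hi : R) :
  (forall t, lo < t < hi -> a < t /\ Rbar_lt t b) -> monotone_on f a b -> monotone_on f lo hi.
Proof.
  intros Hsub [Hm|Hm]; [left|right]; intros x y Hx Hxy Hy; simpl in Hy;
    apply Hm; try apply (Hsub x); try apply (Hsub y); lra.
Qed.

Lemma is_RInt_restrict (d u : R -> R) (a lo hi b : R) :
  a <= lo <= hi -> hi <= b -> ex_RInt u lo hi ->
  (forall t, a < t < lo -> d t = 0) -> (forall t, lo < t < hi -> d t = u t) ->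
  (forall t, hi < t < b -> d t = 0) ->
  is_RInt d a b (RInt u lo hi).
Proof.
  intros Hlo Hhi Hu Hd1 Hd2 Hd3.
  rewrite <- (Rplus_0_r (RInt u lo hi)), <- (Rplus_0_l (RInt u lo hi)).
  apply (is_RInt_Chasles d a hi b); [apply (is_RInt_Chasles d a lo hi)|].
  - apply (is_RInt_ext (fun _ => 0)); [|apply is_RInt_R0].
    intros t Ht. rewrite Rmin_left, Rmax_right in Ht by lra. symmetry. apply Hd1, Ht.
  - apply (is_RInt_ext u); [|apply (RInt_correct u), Hu].
    intros t Ht. rewrite Rmin_left, Rmax_right in Ht by lra. symmetry. apply Hd2, Ht.
  - apply (is_RInt_ext (fun _ => 0)); [|apply is_RInt_R0].
    intros t Ht. rewrite Rmin_left, Rmax_right in Ht by lra. symmetry. apply Hd3, Ht.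
Qed.

Lemma is_RInt_piece (u : R -> R) (a0 : R) (b0 : Rbar) (T : R) :
  Rbar_lt a0 b0 -> 0 <= a0 -> 0 <= T -> ex_RInt u 0 T ->
  exists lo hi, 0 <= lo <= hi /\ hi <= T /\
    (forall t, lo < t < hi -> a0 < t /\ Rbar_lt t b0) /\
    is_RInt (fun t => if in_piece a0 b0 t then u t else 0) 0 T (RInt u lo hi).
Proof.
  intros Hab Ha0 HT Hu.
  assert (Hout : forall t, ~ (a0 < t /\ Rbar_lt t b0) -> (if in_piece a0 b0 t then u t else 0) = 0).
  { intros t Ht. destruct (in_piece a0 b0 t) eqn:E; [|reflexivity].
    apply in_piece_true in E. contradiction. }
  destruct (Rle_lt_dec T a0) as [HTa|HTa].
  { exists T, T. refine (conj (conj _ _) (conj _ (conj _ _))); [lra|lra|lra|intros t Ht; lra|].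
    apply (is_RInt_restrict _ u); [lra|lra|apply ex_RInt_point| |intros t Ht; lra|intros t Ht; lra].
    intros t Ht. apply Hout. lra. }
  set (hi := match b0 with Finite r => Rmin r T | _ => T end).
  assert (Hhi : a0 < hi <= T /\ (forall t, t < hi -> Rbar_lt t b0) /\
                (forall t, hi < t < T -> ~ Rbar_lt t b0)).
  { unfold hi. destruct b0 as [r| |]; simpl in Hab |- *; [|split; [lra|split]|contradiction].
    - repeat split; [apply Rmin_glb_lt; lra|apply Rmin_r| |]; intros t Ht.
      + pose proof (Rmin_l r T). lra.
      + unfold Rmin in Ht. destruct (Rle_dec r T); lra.
    - intros; exact I.
    - intros t Ht. lra. }
  destruct Hhi as [[Hahi HhiT] [Hlt Hge]].
  exists a0, hi. refine (conj (conj _ _) (conj _ (conj _ _))); try lra.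
  - intros t Ht. split; [lra|apply Hlt; lra].
  - apply (is_RInt_restrict _ u); try lra.
    + apply (ex_RInt_sub u 0 T _ _ Hu); lra.
    + intros t Ht. apply Hout. lra.
    + intros t Ht. assert (E : in_piece a0 b0 t = true) by (apply in_piece_true; split; [lra|apply Hlt; lra]).
      rewrite E. reflexivity.
    + intros t Ht. apply Hout. intros [_ H]. apply (Hge t Ht H).
Qed.

(* [piecewise_diff_monotone] without the differentiability requirement, which the argument
   never uses. *)
Definition piecewise_monotone (N : nat) (f : R -> R) : Prop :=
  exists (a : nat -> R) (b : nat -> Rbar),
    (forall i, (i < N)%nat -> 0 <= a i /\ Rbar_lt (a i) (b i)) /\
    (forall i j, (i < j)%nat -> (j < N)%nat ->
        Rbar_le (b i) (a j) \/ Rbar_le (b j) (a i)) /\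
    (forall t, 0 <= t -> f t <> 0 ->
        exists i, (i < N)%nat /\ a i <= t /\ Rbar_le t (b i)) /\
    (forall i, (i < N)%nat -> monotone_on f (a i) (b i)).

Lemma piecewise_diff_monotone_monotone (N : nat) (f : R -> R) :
  piecewise_diff_monotone N f -> piecewise_monotone N f.
Proof.
  intros [a [b [Hab [Hdisj [Hcov Hpc]]]]].
  exists a, b. refine (conj Hab (conj Hdisj (conj Hcov _))).
  intros i Hi. apply (Hpc i Hi).
Qed.

Lemma abs_RInt_head_le (f k : R -> R) (C0 lam al T h : R) (N : nat) :
  0 <= al <= lam -> 0 < h -> 0 <= T -> ex_RInt f 0 T ->
  (forall t, 0 <= f t) -> (forall t, t < 0 -> f t = 0) ->
  (forall t, 0 <= t -> f t <= C0 * exp (- lam * t)) -> piecewise_monotone N f ->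
  (forall x, continuous k x) -> (forall x, Rabs (k x) <= 1) -> (forall x, k (x + h) = - k x) ->
  Rabs (RInt (fun t => f t * (exp (al * t) * k t)) 0 T) <= INR N * (4 * C0 * exp (al * T) * h).
Proof.
  intros Hal Hh HT Hf Hf0 Hfneg Hfb [a [b [Hab [Hdisj [Hcov Hmon]]]]] Hkc Hk1 Hkh.
  set (u := fun t => f t * (exp (al * t) * k t)).
  assert (Hu : ex_RInt u 0 T).
  { apply ex_RInt_mult_continuous; [exact HT|exact Hf|intros x _].
    apply (continuous_mult (fun t => exp (al * t)) k); [apply continuous_exp_scale|apply Hkc]. }
  (* A point of the support outside every open piece is an endpoint of some piece. *)
  apply (abs_RInt_le_pieces (fun i => in_piece (a i) (b i))
           (flat_map (fun i => a i :: real (b i) :: nil) (seq 0 N))); [exact Hu| | |].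
  - apply in_piece_disjoint, Hdisj.
  - intros t Hut.
    assert (Hft : f t <> 0) by (intros E; apply Hut; unfold u; rewrite E; ring).
    assert (Ht : 0 <= t) by (destruct (Rlt_le_dec t 0) as [Hneg|]; [exfalso; apply Hft, Hfneg, Hneg|assumption]).
    destruct (Hcov t Ht Hft) as [i [Hi [Hait Htbi]]].
    destruct (Req_dec t (a i)) as [Ea|Hna]; [|destruct (Req_dec t (real (b i))) as [Eb|Hnb]].
    + left. apply in_flat_map. exists i. split; [apply in_seq; lia|left; congruence].
    + left. apply in_flat_map. exists i. split; [apply in_seq; lia|right; left; congruence].
    + right. exists i. split; [exact Hi|]. apply in_piece_true. split; [lra|].
      destruct (b i) as [r| |]; simpl in Htbi, Hnb |- *; [lra|exact I|contradiction].
  - intros i Hi. destruct (Hab i Hi) as [Hai Habi].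
    destruct (is_RInt_piece u (a i) (b i) T Habi Hai HT Hu) as [lo [hi [Hlo [HhiT [Hsub Hpiece]]]]].
    exists (RInt u lo hi). split; [exact Hpiece|].
    apply (abs_RInt_exp_weighted_monotone_le f k C0 lam al lo hi h); try assumption.
    + apply (ex_RInt_sub f 0 T _ _ Hf); lra.
    + apply (monotone_on_sub f (a i) (b i) lo hi Hsub), Hmon, Hi.
Qed.

(** * Improper integrals with exponential decay *)

Lemma is_RInt_exp_decay (c kap y y' : R) : 0 < kap ->
  is_RInt (fun t => c * exp (- kap * t)) y y' (c * (exp (- kap * y) - exp (- kap * y')) / kap).
Proof.
  intros Hk.
  set (F := fun t => - c * exp (- kap * t) / kap).
  replace (c * (exp (- kap * y) - exp (- kap * y')) / kap) with (minus (F y') (F y))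
    by (unfold F, minus, plus, opp; simpl; field; lra).
  apply (is_RInt_derive F).
  - intros x _. unfold F. auto_derive; [exact I|field; lra].
  - intros x _. apply (ex_derive_continuous (fun t => c * exp (- kap * t))). auto_derive. exact I.
Qed.

Lemma norm_RInt_le_exp_decay {V : CompleteNormedModule R_AbsRing} (g : R -> V) (c kap y y' : R) :
  0 < kap -> y <= y' -> ex_RInt g y y' ->
  (forall t, y <= t <= y' -> norm (g t) <= c * exp (- kap * t)) ->
  norm (RInt g y y') <= c * exp (- kap * y) / kap.
Proof.
  intros Hk Hy Hg Hb.
  assert (Hc : 0 <= c).
  { pose proof (Hb y (conj (Rle_refl y) Hy)). pose proof (norm_ge_0 (g y)).
    pose proof (exp_pos (- kap * y)).
    destruct (Rle_lt_dec 0 c) as [|Hneg]; [assumption|].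
    assert (c * exp (- kap * y) < 0) by (apply Rmult_neg_pos; assumption). lra. }
  eapply Rle_trans.
  - apply (norm_RInt_le g (fun t => c * exp (- kap * t)) y y'); [exact Hy|exact Hb|apply RInt_correct, Hg|].
    apply is_RInt_exp_decay, Hk.
  - unfold Rdiv. apply Rmult_le_compat_r; [apply Rlt_le, Rinv_0_lt_compat, Hk|].
    apply Rmult_le_compat_l; [exact Hc|]. pose proof (exp_pos (- kap * y')). lra.
Qed.

Lemma exp_decay_eventually_small (c kap eps : R) : 0 < kap -> 0 < eps ->
  exists M, forall y, M <= y -> c * exp (- kap * y) / kap < eps.
Proof.
  intros Hk He.
  exists (Rabs c / (kap * kap * eps) + 1). intros y Hy.
  assert (Hq : 0 <= Rabs c / (kap * kap * eps)).
  { apply Rdiv_le_0_compat; [apply Rabs_pos|]. apply Rmult_lt_0_compat; [nra|lra]. }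
  assert (Hky : 0 < kap * y) by nra.
  pose proof (exp_ineq1 (kap * y) ltac:(lra)) as Hexp.
  assert (Einv : exp (- kap * y) = / exp (kap * y)).
  { rewrite <- exp_Ropp. f_equal. ring. }
  assert (Hbig : Rabs c < eps * kap * exp (kap * y)).
  { assert (Rabs c <= eps * kap * (kap * y)).
    { apply Rle_trans with (Rabs c / (kap * kap * eps) * (kap * kap * eps)).
      - right. field. split; lra.
      - replace (eps * kap * (kap * y)) with (y * (kap * kap * eps)) by ring.
        apply Rmult_le_compat_r; [nra|lra]. }
    assert (eps * kap * (kap * y) < eps * kap * exp (kap * y)).
    { apply Rmult_lt_compat_l; [nra|lra]. }
    lra. }
  rewrite Einv. apply Rle_lt_trans with (Rabs c / exp (kap * y) / kap).
  - unfold Rdiv. apply Rmult_le_compat_r; [apply Rlt_le, Rinv_0_lt_compat, Hk|].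
    apply Rmult_le_compat_r; [apply Rlt_le, Rinv_0_lt_compat, exp_pos|apply Rle_abs].
  - pose proof (exp_pos (kap * y)).
    apply Rmult_lt_reg_r with (kap * exp (kap * y)); [nra|].
    replace (Rabs c / exp (kap * y) / kap * (kap * exp (kap * y))) with (Rabs c) by (field; lra).
    lra.
Qed.

Lemma is_RInt_gen_exp_decay {V : CompleteNormedModule R_AbsRing} (g : R -> V) (c kap a : R) :
  0 < kap -> (forall y, a <= y -> ex_RInt g a y) ->
  (forall t, a <= t -> norm (g t) <= c * exp (- kap * t)) ->
  exists l, is_RInt_gen g (at_point a) (Rbar_locally p_infty) l /\
            norm l <= c * exp (- kap * a) / kap.
Proof.
  intros Hk Hg Hb.
  set (I := fun y => RInt g a y).
  assert (Htail : forall y y', a <= y -> y <= y' -> norm (minus (I y') (I y)) <= c * exp (- kap * y) / kap).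
  { intros y y' Hy Hyy'.
    assert (Hgy : ex_RInt g y y') by (apply (ex_RInt_Chasles_2 g a y y'); [lra|apply Hg; lra]).
    replace (minus (I y') (I y)) with (RInt g y y').
    - apply norm_RInt_le_exp_decay; [exact Hk|exact Hyy'|exact Hgy|]. intros t Ht. apply Hb. lra.
    - unfold I. rewrite <- (RInt_Chasles g a y y' (Hg y Hy) Hgy).
      unfold minus. rewrite plus_comm, plus_assoc, plus_opp_l, plus_zero_l. reflexivity. }
  destruct (proj1 (filterlim_locally_cauchy (F := Rbar_locally p_infty) I)) as [l Hl].
  { intros eps. destruct (exp_decay_eventually_small c kap eps Hk (cond_pos eps)) as [M HM].
    exists (fun y => Rmax a M <= y). split; [exists (Rmax a M); intros; lra|].
    assert (Hmax := Rmax_l a M). assert (Hmax' := Rmax_r a M).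
    intros u v Hu Hv. destruct (Rle_lt_dec u v) as [Huv|Huv].
    - apply (@norm_compat1 R_AbsRing V). eapply Rle_lt_trans; [apply Htail; lra|apply HM; lra].
    - apply ball_sym, (@norm_compat1 R_AbsRing V). eapply Rle_lt_trans; [apply Htail; lra|apply HM; lra]. }
  exists l. split.
  - intros P [eps HP].
    destruct (Hl _ (locally_ball l eps)) as [M HM].
    apply (Filter_prod _ _ _ (fun x => x = a) (fun y => Rmax a M < y)); [reflexivity|exists (Rmax a M); auto|].
    intros x y -> Hy. assert (Hmax := Rmax_l a M). assert (Hmax' := Rmax_r a M).
    exists (I y). split; [apply RInt_correct, Hg; lra|apply HP, HM; lra].
  - assert (Hnorm : filterlim (fun y => norm (I y)) (Rbar_locally p_infty) (locally (norm l)))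
      by (apply (filterlim_comp _ _ _ I norm _ (locally l)); [exact Hl|apply (@filterlim_norm R_AbsRing V)]).
    assert (Hle : Rbar_le (norm l) (c * exp (- kap * a) / kap)).
    { apply (filterlim_le (F := Rbar_locally p_infty) (fun y => norm (I y)) (fun _ => c * exp (- kap * a) / kap)).
      - exists a. intros y Hy.
        apply norm_RInt_le_exp_decay; [exact Hk|lra|apply Hg; lra|intros t Ht; apply Hb; lra].
      - exact Hnorm.
      - apply filterlim_const. }
    exact Hle.
Qed.

(** * The Laplace transform of the density *)

Lemma density_ex_RInt (f : R -> R) :
  is_RInt_gen f (at_point 0) (Rbar_locally p_infty) 1 -> forall y, 0 <= y -> ex_RInt f 0 y.
Proof.
  intros H y Hy.
  destruct (H _ (locally_ball (1 : R_NormedModule) (mkposreal 1 Rlt_0_1))) as [Q Rb HQ [M HM] HQR].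
  destruct (HQR 0 (Rmax y M + 1) HQ) as [v [Hv _]]; [apply HM; pose proof (Rmax_r y M); lra|].
  apply (ex_RInt_Chasles_1 f 0 y (Rmax y M + 1)); [pose proof (Rmax_l y M); lra|].
  exists v. exact Hv.
Qed.

Definition laplace_integrand (f : R -> R) (s : C) (t : R) : C :=
  scal (f t) (Cexp (Copp (Cmult s (RtoC t)))).

Lemma laplace_integrand_components (f : R -> R) (al si t : R) :
  laplace_integrand f (- al, si) t =
  (f t * (exp (al * t) * cos (- (si * t))), f t * (exp (al * t) * sin (- (si * t)))).
Proof.
  unfold laplace_integrand, Cexp, Copp, Cmult, RtoC. simpl.
  replace (- (- al * t - si * 0)) with (al * t) by ring.
  replace (- (- al * 0 + si * t)) with (- (si * t)) by ring.
  reflexivity.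
Qed.

Lemma Cmod_laplace_integrand (f : R -> R) (al si t : R) :
  0 <= f t -> Cmod (laplace_integrand f (- al, si) t) = f t * exp (al * t).
Proof.
  intros Hf. rewrite laplace_integrand_components. unfold Cmod. simpl.
  rewrite <- (sqrt_square (f t * exp (al * t))) by (apply Rmult_le_pos; [exact Hf|apply Rlt_le, exp_pos]).
  f_equal. pose proof (sin2_cos2 (- (si * t))) as E. unfold Rsqr in E.
  transitivity (f t * exp (al * t) * (f t * exp (al * t)) *
    (sin (- (si * t)) * sin (- (si * t)) + cos (- (si * t)) * cos (- (si * t)))); [ring|].
  rewrite E. ring.
Qed.

Lemma continuous_exp_mul_cos (al si x : R) :
  continuous (fun t => exp (al * t) * cos (- (si * t))) x.
Proof. apply (ex_derive_continuous (fun t => exp (al * t) * cos (- (si * t)))). auto_derive. exact I. Qed.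

Lemma continuous_exp_mul_sin (al si x : R) :
  continuous (fun t => exp (al * t) * sin (- (si * t))) x.
Proof. apply (ex_derive_continuous (fun t => exp (al * t) * sin (- (si * t)))). auto_derive. exact I. Qed.

Lemma is_RInt_laplace_integrand (f : R -> R) (al si a b : R) :
  a <= b -> ex_RInt f a b ->
  @is_RInt C_R_NormedModule (laplace_integrand f (- al, si)) a b
    (RInt (fun t => f t * (exp (al * t) * cos (- (si * t)))) a b,
     RInt (fun t => f t * (exp (al * t) * sin (- (si * t)))) a b).
Proof.
  intros Hab Hf.
  set (u1 := fun t => f t * (exp (al * t) * cos (- (si * t)))).
  set (u2 := fun t => f t * (exp (al * t) * sin (- (si * t)))).
  assert (H1 : is_RInt u1 a b (RInt u1 a b)).
  { apply (RInt_correct u1), ex_RInt_mult_continuous; [exact Hab|exact Hf|].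
    intros x _. apply continuous_exp_mul_cos. }
  assert (H2 : is_RInt u2 a b (RInt u2 a b)).
  { apply (RInt_correct u2), ex_RInt_mult_continuous; [exact Hab|exact Hf|].
    intros x _. apply continuous_exp_mul_sin. }
  apply (is_RInt_ext (V := C_R_NormedModule) (fun t => (u1 t, u2 t))).
  - intros t _. symmetry. apply laplace_integrand_components.
  - exact (is_RInt_fct_extend_pair (U := R_NormedModule) (V := R_NormedModule)
             (fun t => (u1 t, u2 t)) a b _ _ H1 H2).
Qed.

Lemma cos_sin_antiperiodic (si x : R) : si <> 0 ->
  cos (- (si * (x + PI / Rabs si))) = - cos (- (si * x)) /\
  sin (- (si * (x + PI / Rabs si))) = - sin (- (si * x)).
Proof.
  intros Hs. destruct (Rlt_le_dec 0 si) as [Hp|Hn].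
  - rewrite Rabs_right by lra.
    replace (- (si * (x + PI / si))) with (- (si * x) - PI) by (field; lra).
    rewrite cos_minus, sin_minus, cos_PI, sin_PI. split; ring.
  - rewrite Rabs_left by lra.
    replace (- (si * (x + PI / - si))) with (- (si * x) + PI) by (field; lra).
    rewrite neg_cos, neg_sin. split; reflexivity.
Qed.

Lemma Cmod_le_components (z : C) (B : R) :
  Rabs (fst z) <= B -> Rabs (snd z) <= B -> Cmod z <= 2 * B.
Proof.
  intros H1 H2. eapply Rle_trans; [apply Cmod_2Rmax|].
  assert (Hs2 : sqrt 2 <= 2).
  { rewrite <- (sqrt_square 2) at 2 by lra. apply sqrt_le_1_alt. lra. }
  assert (Hm : Rmax (Rabs (fst z)) (Rabs (snd z)) <= B) by (apply Rmax_lub; assumption).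
  assert (0 <= Rmax (Rabs (fst z)) (Rabs (snd z))) by (eapply Rle_trans; [apply Rabs_pos|apply Rmax_l]).
  apply Rmult_le_compat; [apply sqrt_pos|assumption|exact Hs2|exact Hm].
Qed.

Lemma Cmod_RInt_laplace_head_le (f : R -> R) (C0 lam al si T : R) (N : nat) :
  0 <= al <= lam -> si <> 0 -> 0 <= T -> ex_RInt f 0 T ->
  (forall t, 0 <= f t) -> (forall t, t < 0 -> f t = 0) ->
  (forall t, 0 <= t -> f t <= C0 * exp (- lam * t)) -> piecewise_monotone N f ->
  Cmod (@RInt C_R_CompleteNormedModule (laplace_integrand f (- al, si)) 0 T) <=
    8 * INR N * C0 * PI * exp (al * T) / Rabs si.
Proof.
  intros Hal Hsi HT Hf Hf0 Hfneg Hfb Hpw.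
  rewrite (is_RInt_unique (V := C_R_CompleteNormedModule) _ _ _ _ (is_RInt_laplace_integrand f al si 0 T HT Hf)).
  assert (Hh : 0 < PI / Rabs si) by (apply Rdiv_lt_0_compat; [apply PI_RGT_0|apply Rabs_pos_lt, Hsi]).
  replace (8 * INR N * C0 * PI * exp (al * T) / Rabs si)
    with (2 * (INR N * (4 * C0 * exp (al * T) * (PI / Rabs si))))
    by (field; apply Rabs_no_R0, Hsi).
  apply Cmod_le_components; simpl;
    apply (abs_RInt_head_le f _ C0 lam al T (PI / Rabs si) N); try assumption.
  - intros x. apply (ex_derive_continuous (fun t => cos (- (si * t)))). auto_derive. exact I.
  - intros x. apply Rabs_le, COS_bound.
  - intros x. apply (cos_sin_antiperiodic si x Hsi).
  - intros x. apply (ex_derive_continuous (fun t => sin (- (si * t)))). auto_derive. exact I.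
  - intros x. apply Rabs_le, SIN_bound.
  - intros x. apply (cos_sin_antiperiodic si x Hsi).
Qed.

Lemma is_RInt_gen_laplace_integrand (f : R -> R) (C0 lam al si a : R) :
  0 < al -> 2 * al <= lam -> 0 <= a -> (forall y, 0 <= y -> ex_RInt f 0 y) ->
  (forall t, 0 <= f t) -> (forall t, 0 <= t -> f t <= C0 * exp (- lam * t)) ->
  exists l : C,
    @is_RInt_gen C_R_NormedModule (laplace_integrand f (- al, si)) (at_point a) (Rbar_locally p_infty) l /\
            Cmod l <= C0 * exp (- al * a) / al.
Proof.
  intros Hal Hlam Ha Hf Hf0 Hfb.
  destruct (@is_RInt_gen_exp_decay C_R_CompleteNormedModule (laplace_integrand f (- al, si)) C0 al a Hal)
    as [l [Hl Bl]].
  - intros y Hy. exists (RInt (fun t => f t * (exp (al * t) * cos (- (si * t)))) a y,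
                        RInt (fun t => f t * (exp (al * t) * sin (- (si * t)))) a y).
    apply is_RInt_laplace_integrand; [exact Hy|].
    apply (ex_RInt_Chasles_2 f 0 a y); [lra|apply Hf; lra].
  - intros t Ht. rewrite <- Cmod_norm, Cmod_laplace_integrand by apply Hf0.
    apply Rle_trans with (C0 * exp (- lam * t) * exp (al * t)).
    + apply Rmult_le_compat_r; [apply Rlt_le, exp_pos|apply Hfb; lra].
    + rewrite Rmult_assoc, <- exp_plus.
      assert (HC0 : 0 <= C0).
      { pose proof (Hfb t ltac:(lra)). pose proof (Hf0 t). pose proof (exp_pos (- lam * t)).
        destruct (Rle_lt_dec 0 C0) as [|Hneg]; [assumption|].
        assert (C0 * exp (- lam * t) < 0) by (apply Rmult_neg_pos; assumption). lra. }
      apply Rmult_le_compat_l; [exact HC0|]. apply exp_le_exp. nra.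
  - exists l. split; [exact Hl|]. rewrite Cmod_norm. exact Bl.
Qed.

Lemma laplace_density_eq (f : R -> R) (s l : C) :
  @is_RInt_gen C_R_NormedModule (laplace_integrand f s) (at_point 0) (Rbar_locally p_infty) l ->
  laplace_density f s = l.
Proof.
  intros H. exact (@is_RInt_gen_unique C_R_CompleteNormedModule (at_point 0) (Rbar_locally p_infty)
    _ _ (laplace_integrand f s) l H).
Qed.

Lemma Cmod_laplace_density_le (f : R -> R) (C0 lam al si : R) :
  0 < al -> 2 * al <= lam -> is_density_on_nonneg f ->
  (forall t, 0 <= t -> f t <= C0 * exp (- lam * t)) ->
  Cmod (laplace_density f (- al, si)) <= C0 / al.
Proof.
  intros Hal Hlam [Hf0 [_ Hint]] Hfb.
  destruct (is_RInt_gen_laplace_integrand f C0 lam al si 0) as [l [Hl Bl]];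
    try assumption; [lra|apply density_ex_RInt, Hint|].
  rewrite (laplace_density_eq _ _ _ Hl).
  rewrite Rmult_0_r, exp_0, Rmult_1_r in Bl. exact Bl.
Qed.

Lemma Cmod_laplace_density_le_sqrt (f : R -> R) (C0 lam al si : R) (N : nat) :
  0 < al -> 2 * al <= lam -> Rmax 1 al <= Rabs si -> is_density_on_nonneg f ->
  (forall t, 0 <= t -> f t <= C0 * exp (- lam * t)) -> piecewise_monotone N f ->
  Cmod (laplace_density f (- al, si)) <= (8 * INR N * C0 * PI + C0 / al) / sqrt (Rabs si).
Proof.
  intros Hal Hlam Hsi [Hf0 [Hfneg Hint]] Hfb Hpw.
  pose proof (density_ex_RInt f Hint) as Hf.
  set (w := Rabs si) in *.
  assert (Hw1 : 1 <= w) by (pose proof (Rmax_l 1 al); lra).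
  assert (Hsi0 : si <> 0) by (intros E; unfold w in Hw1; rewrite E, Rabs_R0 in Hw1; lra).
  (* Splitting at [T] balances the head, of size [e^(al T) / w], against the tail, of size [e^(- al T)]. *)
  set (T := ln w / (2 * al)).
  assert (HT : 0 <= T).
  { unfold T. apply Rdiv_le_0_compat; [|lra]. rewrite <- ln_1. apply ln_le; lra. }
  assert (HeT : exp (al * T) = sqrt w).
  { rewrite <- Rpower_sqrt by lra. unfold Rpower, T. f_equal. field. lra. }
  assert (Hsw : 0 < sqrt w) by (apply sqrt_lt_R0; lra).
  destruct (is_RInt_gen_laplace_integrand f C0 lam al si T) as [lT [HlT BlT]]; try assumption.
  assert (Hhead_is : @is_RInt_gen C_R_NormedModule (laplace_integrand f (- al, si))
                      (at_point 0) (at_point T) (@RInt C_R_CompleteNormedModule (laplace_integrand f (- al, si)) 0 T)).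
  { apply is_RInt_gen_at_point, (RInt_correct (V := C_R_CompleteNormedModule)). eexists.
    apply is_RInt_laplace_integrand; [exact HT|apply Hf, HT]. }
  rewrite (laplace_density_eq _ _ _ (is_RInt_gen_Chasles _ T _ _ Hhead_is HlT)).
  eapply Rle_trans; [apply Cmod_triangle|].
  pose proof (Cmod_RInt_laplace_head_le f C0 lam al si T N ltac:(lra) Hsi0 HT (Hf T HT) Hf0 Hfneg Hfb Hpw) as Hhead.
  rewrite HeT in Hhead. fold w in Hhead.
  replace (exp (- al * T)) with (/ sqrt w) in BlT
    by (rewrite <- HeT, <- exp_Ropp; f_equal; ring).
  replace (8 * INR N * C0 * PI * sqrt w / w) with (8 * INR N * C0 * PI / sqrt w) in Hhead
    by (rewrite <- (sqrt_sqrt w) at 3 by lra; field; lra).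
  replace ((8 * INR N * C0 * PI + C0 / al) / sqrt w)
    with (8 * INR N * C0 * PI / sqrt w + C0 * / sqrt w / al) by (field; lra).
  lra.
Qed.

Lemma sqrt_Cmod_le (al si : R) : 0 <= al ->
  sqrt (Cmod (- al, si)) <= 2 * sqrt (Rmax al (Rabs si)).
Proof.
  intros Hal.
  assert (Hmod : Cmod (- al, si) <= 2 * Rmax al (Rabs si)).
  { apply Cmod_le_components; simpl; [|apply Rmax_r].
    rewrite Rabs_Ropp, Rabs_pos_eq by lra. apply Rmax_l. }
  assert (Hmax : 0 <= Rmax al (Rabs si)) by (eapply Rle_trans; [apply Rabs_pos|apply Rmax_r]).
  rewrite <- (sqrt_square 2), <- sqrt_mult by lra.
  apply sqrt_le_1_alt. lra.
Qed.

Theorem lemma11 (C0 lam alpha : R) (N : nat) :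
  0 < C0 -> 0 < lam -> 0 < alpha -> alpha <= lam / 2 ->
  exists K : R,
    forall f : R -> R,
      is_density_on_nonneg f ->
      (forall t, 0 <= t -> f t <= C0 * exp (- lam * t)) ->
      piecewise_diff_monotone N f ->
      forall s : C, Re s = - alpha ->
        Cmod (laplace_density f s) <= K / sqrt (Cmod s).
Proof.
  intros HC0 Hlam Hal Hall.
  set (W0 := Rmax 1 alpha).
  assert (HW0 : 1 <= W0 /\ alpha <= W0) by (split; [apply Rmax_l|apply Rmax_r]).
  set (A := 8 * INR N * C0 * PI + C0 / alpha).
  assert (HCa : 0 < C0 / alpha) by (apply Rdiv_lt_0_compat; lra).
  assert (HA : 0 <= A).
  { pose proof (pos_INR N). pose proof PI_RGT_0.
    assert (0 <= INR N * C0 * PI) by (apply Rmult_le_pos; [apply Rmult_le_pos|]; lra).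
    unfold A. lra. }
  exists (2 * (A + C0 / alpha * sqrt W0)).
  intros f Hf Hfb Hpw [sr si] Hs. simpl in Hs. subst sr.
  assert (Hs : alpha <= Cmod (- alpha, si)).
  { pose proof (re_le_Cmod (- alpha, si)) as H. simpl in H. rewrite Rabs_Ropp, Rabs_pos_eq in H; lra. }
  apply (Rmult_le_reg_r (sqrt (Cmod (- alpha, si)))); [apply sqrt_lt_R0; lra|].
  unfold Rdiv. rewrite Rmult_assoc, Rinv_l, Rmult_1_r by (apply Rgt_not_eq, sqrt_lt_R0; lra).
  pose proof (sqrt_Cmod_le alpha si (Rlt_le _ _ Hal)) as Hsq.
  assert (HCW : 0 <= C0 / alpha * sqrt W0) by (apply Rmult_le_pos; [lra|apply sqrt_pos]).
  destruct (Rle_lt_dec W0 (Rabs si)) as [Hbig|Hlow].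
  - assert (Hw : 0 < sqrt (Rabs si)) by (apply sqrt_lt_R0; lra).
    rewrite Rmax_right in Hsq by lra.
    apply Rle_trans with (A / sqrt (Rabs si) * (2 * sqrt (Rabs si)));
      [|replace (A / sqrt (Rabs si) * (2 * sqrt (Rabs si))) with (2 * A) by (field; lra); lra].
    apply Rmult_le_compat; [apply Cmod_ge_0|apply sqrt_pos| |exact Hsq].
    apply (Cmod_laplace_density_le_sqrt f C0 lam alpha si N); try (assumption || lra).
    apply piecewise_diff_monotone_monotone, Hpw.
  - assert (sqrt (Rmax alpha (Rabs si)) <= sqrt W0) by (apply sqrt_le_1_alt, Rmax_lub; lra).
    apply Rle_trans with (C0 / alpha * (2 * sqrt W0)); [|lra].
    apply Rmult_le_compat; [apply Cmod_ge_0|apply sqrt_pos| |lra].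
    apply (Cmod_laplace_density_le f C0 lam alpha si); try (assumption || lra).
Qed.
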